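(* Let $k_0,k_1,k_{-1},k_2,e_T$ be positive real numbers and consider the system \[ \dot s = k_0-k_1(e_T-c)s+k_{-1}c,\qquad \dot c = k_1(e_T-c)s-(k_{-1}+k_2)c \] on $\{s\ge0,\ 0\le c\le e_T\}$. Define the set \[ W_1:=\left\{(s,c):\ s\ge 0,\ \max\left\{0,\ \frac{k_1e_Ts-k_0}{k_1s+k_{-1}}\right\}\le c\le \frac{k_1e_Ts}{k_1s+k_{-1}+k_2}\right\}. \] Then: (a) If the system has no stationary point with positive coordinates, i.e. $k_0>k_2e_T$, then $\frac{k_1e_Ts}{k_1s+k_{-1}+k_2}>\frac{k_1e_Ts-k_0}{k_1s+k_{-1}}$ for all $s\ge 0$, and $W_1$ extends to $s\to\infty$. If the system has the positive stationary point $(\widehat s,\widehat c)$, then the two curves $c=\frac{k_1e_Ts}{k_1s+k_{-1}+k_2}$ and $c=\frac{k_1e_Ts-k_0}{k_1s+k_{-1}}$ meet at this point, and $s\le\widehat s$, $c\le \widehat c$ for all points $(s,c)\in W_1$. (b) $W_1$ is positively invariant for the system, and $\dot s\ge 0$ on $W_1$.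
   Context: The curves $c=\frac{k_1e_Ts}{k_1s+k_{-1}+k_2}$ and $c=\frac{k_1e_Ts-k_0}{k_1s+k_{-1}}$ are the $c$-nullcline ($\dot c=0$) and the $s$-nullcline ($\dot s=0$), respectively. When $k_2e_T>k_0$ the system has the unique stationary point $(\widehat s,\widehat c)=\left(\frac{(k_{-1}+k_2)k_0}{k_1(k_2e_T-k_0)},\frac{k_0}{k_2}\right)$ with positive coordinates. *)

From Stdlib Require Import Reals.
From Coquelicot Require Import Coquelicot.
Open Scope R_scope.

Definition sdot (k0 k1 km1 k2 eT s c : R) : R :=
  k0 - k1 * (eT - c) * s + km1 * c.
Definition cdot (k0 k1 km1 k2 eT s c : R) : R :=
  k1 * (eT - c) * s - (km1 + k2) * c.

Definition cnull (k0 k1 km1 k2 eT s : R) : R := k1 * eT * s / (k1 * s + km1 + k2).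
Definition snull (k0 k1 km1 k2 eT s : R) : R := (k1 * eT * s - k0) / (k1 * s + km1).

Definition W1 (k0 k1 km1 k2 eT s c : R) : Prop :=
  0 <= s /\ Rmax 0 (snull k0 k1 km1 k2 eT s) <= c /\ c <= cnull k0 k1 km1 k2 eT s.

(* The positive stationary point (meaningful when k2 eT > k0) *)
Definition shat (k0 k1 km1 k2 eT : R) : R := (km1 + k2) * k0 / (k1 * (k2 * eT - k0)).
Definition chat (k0 k1 km1 k2 eT : R) : R := k0 / k2.

Definition is_solution (k0 k1 km1 k2 eT T : R) (x y : R -> R) : Prop :=
  forall t, 0 <= t < T ->
    is_derive x t (sdot k0 k1 km1 k2 eT (x t) (y t)) /\
    is_derive y t (cdot k0 k1 km1 k2 eT (x t) (y t)).

Definition positively_invariant (k0 k1 km1 k2 eT : R) (A : R -> R -> Prop) : Prop :=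
  forall (T : R) (x y : R -> R), 0 < T ->
    is_solution k0 k1 km1 k2 eT T x y -> A (x 0) (y 0) ->
    forall t, 0 <= t < T -> A (x t) (y t).

From Stdlib Require Import Reals Lra Psatz.
From Coquelicot Require Import Coquelicot.
From Pilot Require Import Defs.
Open Scope R_scope.

(* For s >= 0, W1 is the set where c >= 0 and both rates u = sdot and v = cdot
   are nonnegative, because sdot = (k1 s + km1) (c - snull s) and
   cdot = (k1 s + km1 + k2) (cnull s - c).  Along a trajectory the rates solve
     u' = k1 (c - eT) u + (k1 s + km1) v,   v' = k1 (eT - c) u - (k1 s + km1 + k2) v,
   a linear system that is cooperative while k1 s + km1 >= 0 and c <= eT, and
   cooperative systems preserve the nonnegative quadrant (perturb u, v by
   eps e^(N t) and look at the first time one of them vanishes).  While u, v >= 0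
   the trajectory moves up and to the right, so s stays >= 0, c stays below
   cnull s < eT and the system stays cooperative.  Part (a) is algebra, using
   also sdot + cdot = k0 - k2 c. *)

Lemma continuous_Rmin (f g : R -> R) (x : R) :
  continuous f x -> continuous g x -> continuous (fun s => Rmin (f s) (g s)) x.
Proof.
  intros Hf Hg.
  apply (continuous_ext (fun s => (f s + g s - Rabs (f s - g s)) / 2)).
  { intros s; unfold Rmin; simpl; destruct Rle_dec.
    - rewrite Rabs_left1 by lra; field.
    - rewrite Rabs_right by lra; field. }
  apply (continuous_mult (fun s => f s + g s - Rabs (f s - g s)) (fun _ => /2));
    [| apply continuous_const].
  apply (continuous_minus (fun s => f s + g s) (fun s => Rabs (f s - g s))).
  - apply (continuous_plus f g); assumption.
  - apply (continuous_comp (fun s => f s - g s) Rabs); [| apply continuous_Rabs].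
    apply (continuous_minus f g); assumption.
Qed.

Lemma continuous_pos_near (f : R -> R) (x : R) :
  continuous f x -> 0 < f x -> exists d, 0 < d /\ forall y, Rabs (y - x) < d -> 0 < f y.
Proof.
  intros Hf Hpos.
  destruct (proj1 (filterlim_locally f (f x)) Hf (mkposreal _ Hpos)) as [d Hd].
  exists d; split; [apply cond_pos |].
  intros y Hy.
  assert (Hball : Rabs (f y - f x) < f x) by exact (Hd y Hy).
  apply Rabs_def2 in Hball; lra.
Qed.

Lemma first_zero (m : R -> R) (t : R) :
  0 <= t -> (forall s, 0 <= s <= t -> continuous m s) -> 0 < m 0 -> m t <= 0 ->
  exists t0, 0 < t0 <= t /\ m t0 = 0 /\ forall s, 0 <= s < t0 -> 0 < m s.
Proof.
  intros Ht Hcont Hm0 Hmt.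
  set (E := fun tau => 0 <= tau <= t /\ forall s, 0 <= s <= tau -> 0 < m s).
  assert (HE0 : E 0).
  { split; [lra |]. intros s Hs. replace s with 0 by lra. exact Hm0. }
  destruct (completeness E) as [t0 [Hub Hlub]].
  { exists t. intros z [Hz _]. lra. }
  { exists 0. exact HE0. }
  assert (Ht0 : 0 <= t0 <= t).
  { split; [apply Hub, HE0 | apply Hlub; intros z [Hz _]; lra]. }
  assert (Hbefore : forall s, 0 <= s < t0 -> 0 < m s).
  { intros s Hs. destruct (Rlt_le_dec 0 (m s)) as [|Hms]; [assumption |].
    exfalso. assert (t0 <= s); [| lra].
    apply Hlub. intros z [_ Hz].
    destruct (Rle_lt_dec z s) as [|Hzs]; [assumption |].
    specialize (Hz s ltac:(lra)). lra. }
  assert (Hzero : m t0 = 0).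
  { destruct (Rtotal_order (m t0) 0) as [Hneg | [Heq | Hpos]]; [exfalso | assumption | exfalso].
    - destruct (continuous_pos_near (fun s => - m s) t0) as [d [Hd Hnear]].
      + apply (continuous_opp m), Hcont; lra.
      + lra.
      + assert (t0 <> 0) by (intros E0; rewrite E0 in Hneg; lra).
        set (s := Rmax 0 (t0 - d / 2)).
        assert (0 <= s) by apply Rmax_l.
        assert (t0 - d / 2 <= s) by apply Rmax_r.
        assert (s < t0) by (apply Rmax_lub_lt; lra).
        specialize (Hnear s ltac:(rewrite Rabs_left by lra; lra)).
        specialize (Hbefore s ltac:(lra)). lra.
    - destruct (continuous_pos_near m t0 (Hcont t0 Ht0) Hpos) as [d [Hd Hnear]].
      assert (t0 <> t) by (intros E0; rewrite E0 in Hpos; lra).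
      set (s := Rmin t (t0 + d / 2)).
      assert (s <= t) by apply Rmin_l.
      assert (s <= t0 + d / 2) by apply Rmin_r.
      assert (t0 < s) by (apply Rmin_glb_lt; lra).
      assert (HEs : E s).
      { split; [lra |]. intros z Hz.
        destruct (Rlt_le_dec z t0); [apply Hbefore; lra |].
        apply Hnear. rewrite Rabs_right by lra. lra. }
      specialize (Hub s HEs). lra. }
  exists t0. split; [| split; assumption].
  split; [| lra]. destruct (Req_dec t0 0) as [E0 |]; [rewrite E0 in Hzero; lra | lra].
Qed.

Lemma is_derive_nonpos_at_first_zero (f : R -> R) (t0 df : R) :
  is_derive f t0 df -> 0 < t0 -> f t0 = 0 ->
  (forall s, 0 <= s < t0 -> 0 < f s) -> df <= 0.
Proof.
  intros Hd Ht0 Hf Hbefore.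
  destruct (Rle_lt_dec df 0) as [| Hdf]; [assumption | exfalso].
  destruct (proj1 (is_derive_Reals f t0 df) Hd (df / 2) ltac:(lra)) as [del Hdel].
  assert (Hdel0 := cond_pos del).
  set (h := - Rmin (del / 2) (t0 / 2)).
  assert (Rmin (del / 2) (t0 / 2) <= del / 2) by apply Rmin_l.
  assert (Rmin (del / 2) (t0 / 2) <= t0 / 2) by apply Rmin_r.
  assert (0 < Rmin (del / 2) (t0 / 2)) by (apply Rmin_glb_lt; lra).
  specialize (Hdel h ltac:(unfold h; lra) ltac:(unfold h; rewrite Rabs_left by lra; lra)).
  rewrite Hf, Rminus_0_r in Hdel. apply Rabs_def2 in Hdel.
  specialize (Hbefore (t0 + h) ltac:(unfold h; lra)).
  assert (f (t0 + h) / h < 0) by (apply Rdiv_pos_neg; [assumption | unfold h; lra]).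
  lra.
Qed.

Lemma is_derive_continuous (f : R -> R) (x l : R) : is_derive f x l -> continuous f x.
Proof. intros Hf. exact (ex_derive_continuous f x (ex_intro _ l Hf)). Qed.

Lemma le_of_is_derive_nonneg (f df : R -> R) (a b : R) : a <= b ->
  (forall s, a <= s <= b -> is_derive f s (df s)) ->
  (forall s, a <= s <= b -> 0 <= df s) -> f a <= f b.
Proof.
  intros Hab Hf Hdf.
  destruct (Req_dec a b) as [-> | Hne]; [lra |].
  destruct (MVT_cor2 f df a b) as [c [Hc Hac]]; [lra | |].
  - intros s Hs. apply is_derive_Reals, Hf, Hs.
  - assert (0 <= df c * (b - a)) by (apply Rmult_le_pos; [apply Hdf |]; lra). lra.
Qed.

Lemma perturbed_first_zero_absurd (f g : R -> R) (alpha beta N eps t0 : R) :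
  0 < eps -> 0 < t0 -> 0 <= beta -> alpha + beta < N ->
  is_derive f t0 (alpha * f t0 + beta * g t0) ->
  f t0 + eps * exp (N * t0) = 0 -> 0 <= g t0 + eps * exp (N * t0) ->
  (forall s, 0 <= s < t0 -> 0 < f s + eps * exp (N * s)) -> False.
Proof.
  intros Heps Ht0 Hbeta HN Hf Hzero Hg Hbefore.
  assert (He := exp_pos (N * t0)).
  assert (Hp : is_derive (fun s => f s + eps * exp (N * s)) t0
                 (alpha * f t0 + beta * g t0 + eps * (N * exp (N * t0)))).
  { apply (is_derive_plus f (fun s => eps * exp (N * s))); [exact Hf |].
    auto_derive; [exact I | ring]. }
  assert (Hle := is_derive_nonpos_at_first_zero _ _ _ Hp Ht0 Hzero Hbefore).
  (* the derivative of f + eps e^(N s) at t0 is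
     eps e^(N t0) (N - alpha - beta) + beta (g t0 + eps e^(N t0)) > 0 *)
  assert (0 < eps * exp (N * t0) * (N - alpha - beta))
    by (apply Rmult_lt_0_compat; [apply Rmult_lt_0_compat |]; lra).
  assert (0 <= beta * (g t0 + eps * exp (N * t0))) by (apply Rmult_le_pos; lra).
  nra.
Qed.

Section CooperativeLinearSystem.

Variables (T : R) (u v a b c d : R -> R).

Hypothesis u_derive : forall s, 0 <= s <= T -> is_derive u s (a s * u s + b s * v s).
Hypothesis v_derive : forall s, 0 <= s <= T -> is_derive v s (c s * u s + d s * v s).
Hypothesis a_continuous : forall s, 0 <= s <= T -> continuous a s.
Hypothesis b_continuous : forall s, 0 <= s <= T -> continuous b s.
Hypothesis c_continuous : forall s, 0 <= s <= T -> continuous c s.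
Hypothesis d_continuous : forall s, 0 <= s <= T -> continuous d s.
Hypothesis b_nonneg : forall s, 0 <= s <= T -> 0 <= b s.
Hypothesis c_nonneg : forall s, 0 <= s <= T -> 0 <= c s.
Hypothesis u0_nonneg : 0 <= u 0.
Hypothesis v0_nonneg : 0 <= v 0.

Lemma cooperative_row_sums_bounded : 0 <= T ->
  exists N, forall s, 0 <= s <= T -> a s + b s < N /\ d s + c s < N.
Proof.
  intros HT.
  destruct (continuous_ab_maj_consistent (fun s => a s + b s) 0 T HT) as [s1 [Hs1 _]].
  { intros s Hs. apply (continuous_plus a b); auto. }
  destruct (continuous_ab_maj_consistent (fun s => d s + c s) 0 T HT) as [s2 [Hs2 _]].
  { intros s Hs. apply (continuous_plus d c); auto. }
  exists (Rmax (a s1 + b s1) (d s2 + c s2) + 1).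
  intros s Hs. specialize (Hs1 s Hs). specialize (Hs2 s Hs). simpl in *.
  assert (a s1 + b s1 <= Rmax (a s1 + b s1) (d s2 + c s2)) by apply Rmax_l.
  assert (d s2 + c s2 <= Rmax (a s1 + b s1) (d s2 + c s2)) by apply Rmax_r.
  lra.
Qed.

Lemma cooperative_perturbed_pos (N eps : R) : 0 < eps ->
  (forall s, 0 <= s <= T -> a s + b s < N /\ d s + c s < N) ->
  forall s, 0 <= s <= T -> 0 < u s + eps * exp (N * s) /\ 0 < v s + eps * exp (N * s).
Proof.
  intros Heps HN s Hs.
  set (p := fun s => u s + eps * exp (N * s)).
  set (q := fun s => v s + eps * exp (N * s)).
  assert (Hcont : forall s, 0 <= s <= T -> continuous (fun s => Rmin (p s) (q s)) s).
  { intros r Hr. apply continuous_Rmin; apply (continuous_plus _ (fun s => eps * exp (N * s))).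
    - apply (is_derive_continuous _ _ _ (u_derive r Hr)).
    - apply (is_derive_continuous _ _ (eps * (N * exp (N * r)))); auto_derive; [exact I | ring].
    - apply (is_derive_continuous _ _ _ (v_derive r Hr)).
    - apply (is_derive_continuous _ _ (eps * (N * exp (N * r)))); auto_derive; [exact I | ring]. }
  destruct (Rlt_le_dec 0 (Rmin (p s) (q s))) as [Hpos | Hneg].
  { split; eapply Rlt_le_trans; [exact Hpos | apply Rmin_l | exact Hpos | apply Rmin_r]. }
  exfalso.
  assert (Hm0 : 0 < Rmin (p 0) (q 0)).
  { unfold p, q. rewrite Rmult_0_r, exp_0. apply Rmin_glb_lt; lra. }
  destruct (first_zero (fun s => Rmin (p s) (q s)) s) as [t0 [Ht0 [Hzero Hbefore]]];
    [lra | intros r Hr; apply Hcont; lra | exact Hm0 | exact Hneg |].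
  assert (Hp_before : forall r, 0 <= r < t0 -> 0 < p r)
    by (intros r Hr; eapply Rlt_le_trans; [apply Hbefore, Hr | apply Rmin_l]).
  assert (Hq_before : forall r, 0 <= r < t0 -> 0 < q r)
    by (intros r Hr; eapply Rlt_le_trans; [apply Hbefore, Hr | apply Rmin_r]).
  assert (Ht0T : 0 <= t0 <= T) by lra.
  destruct (HN t0 Ht0T) as [Hab Hdc].
  revert Hzero; apply Rmin_case_strong; intros Hle Hzero.
  - apply (perturbed_first_zero_absurd u v (a t0) (b t0) N eps t0);
      [lra | lra | apply b_nonneg, Ht0T | lra | apply u_derive, Ht0T
      | exact Hzero | fold (q t0); lra | exact Hp_before].
  - apply (perturbed_first_zero_absurd v u (d t0) (c t0) N eps t0);
      [lra | lra | apply c_nonneg, Ht0T | lra | rewrite Rplus_comm; apply v_derive, Ht0T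
      | exact Hzero | fold (p t0); lra | exact Hq_before].
Qed.

Lemma cooperative_nonneg : forall s, 0 <= s <= T -> 0 <= u s /\ 0 <= v s.
Proof.
  intros s Hs.
  destruct (cooperative_row_sums_bounded ltac:(lra)) as [N HN].
  assert (He := exp_pos (N * s)).
  assert (Hpert : forall eps, 0 < eps -> 0 < u s + eps /\ 0 < v s + eps).
  { intros eps Heps.
    assert (Heps' : 0 < eps / exp (N * s)) by (apply Rdiv_lt_0_compat; lra).
    destruct (cooperative_perturbed_pos N _ Heps' HN s Hs) as [Hu Hv].
    replace (eps / exp (N * s) * exp (N * s)) with eps in * by (field; lra).
    split; assumption. }
  split; apply Rle_plus_epsilon; intros eps Heps; destruct (Hpert eps Heps); lra.
Qed.

End CooperativeLinearSystem.

Section MichaelisMentenModel.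

Variables k0 k1 km1 k2 eT : R.
Hypotheses (k0_pos : 0 < k0) (k1_pos : 0 < k1) (km1_pos : 0 < km1).
Hypotheses (k2_pos : 0 < k2) (eT_pos : 0 < eT).

Local Notation sdot := (sdot k0 k1 km1 k2 eT).
Local Notation cdot := (cdot k0 k1 km1 k2 eT).
Local Notation snull := (snull k0 k1 km1 k2 eT).
Local Notation cnull := (cnull k0 k1 km1 k2 eT).
Local Notation W1 := (W1 k0 k1 km1 k2 eT).
Local Notation shat := (shat k0 k1 km1 k2 eT).
Local Notation chat := (chat k0 k1 km1 k2 eT).

Lemma sdot_snull s c : 0 <= s -> sdot s c = (k1 * s + km1) * (c - snull s).
Proof. intros Hs. unfold Defs.sdot, Defs.snull. field. nra. Qed.

Lemma cdot_cnull s c : 0 <= s -> cdot s c = (k1 * s + km1 + k2) * (cnull s - c).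
Proof. intros Hs. unfold Defs.cdot, Defs.cnull. field. nra. Qed.

Lemma sdot_add_cdot s c : sdot s c + cdot s c = k0 - k2 * c.
Proof. unfold Defs.sdot, Defs.cdot. ring. Qed.

Lemma cnull_ge0 s : 0 <= s -> 0 <= cnull s.
Proof.
  intros Hs. unfold Defs.cnull.
  apply Rdiv_le_0_compat; [apply Rmult_le_pos; [apply Rmult_le_pos |] |]; nra.
Qed.

Lemma cnull_lt_eT s : 0 <= s -> cnull s < eT.
Proof.
  intros Hs. unfold Defs.cnull. apply Rlt_div_l; [nra |].
  assert (0 < eT * (km1 + k2)) by (apply Rmult_lt_0_compat; lra). nra.
Qed.

Lemma W1_iff s c : W1 s c <-> 0 <= s /\ 0 <= c /\ 0 <= sdot s c /\ 0 <= cdot s c.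
Proof.
  split.
  - intros [Hs [Hlow Hup]].
    assert (0 <= c) by (eapply Rle_trans; [apply Rmax_l | exact Hlow]).
    assert (snull s <= c) by (eapply Rle_trans; [apply Rmax_r | exact Hlow]).
    rewrite sdot_snull, cdot_cnull by exact Hs.
    repeat split; try assumption; apply Rmult_le_pos; nra.
  - intros [Hs [Hc [Hsd Hcd]]].
    rewrite sdot_snull in Hsd by exact Hs. rewrite cdot_cnull in Hcd by exact Hs.
    assert (0 < k1 * s + km1) by nra.
    split; [exact Hs | split; [apply Rmax_lub |]]; nra.
Qed.

Lemma W1_lt_eT s c : W1 s c -> c < eT.
Proof. intros [Hs [_ Hup]]. apply (Rle_lt_trans _ _ _ Hup), cnull_lt_eT, Hs. Qed.

Lemma snull_lt_cnull s : k2 * eT < k0 -> 0 <= s -> snull s < cnull s.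
Proof.
  intros Hk Hs.
  (* on the c-nullcline, sdot = k0 - k2 c > k0 - k2 eT > 0 *)
  assert (Hsd : sdot s (cnull s) = k0 - k2 * cnull s).
  { rewrite <- (sdot_add_cdot s), (cdot_cnull s _ Hs). ring. }
  rewrite sdot_snull in Hsd by exact Hs.
  assert (cnull s < eT) by (apply cnull_lt_eT, Hs).
  assert (0 < k1 * s + km1) by nra.
  nra.
Qed.

Lemma W1_cnull s : k2 * eT < k0 -> 0 <= s -> W1 s (cnull s).
Proof.
  intros Hk Hs. split; [exact Hs | split; [| lra]].
  apply Rmax_lub; [apply cnull_ge0, Hs | apply Rlt_le, snull_lt_cnull; assumption].
Qed.

Lemma cnull_shat : k0 < k2 * eT -> cnull shat = chat.
Proof.
  intros Hk. unfold Defs.cnull, Defs.shat, Defs.chat.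
  assert (0 < (km1 + k2) * k2 * eT) by (repeat apply Rmult_lt_0_compat; lra).
  field. repeat split; apply Rgt_not_eq; nra.
Qed.

Lemma snull_shat : k0 < k2 * eT -> snull shat = chat.
Proof.
  intros Hk. unfold Defs.snull, Defs.shat, Defs.chat.
  assert (0 < k2 * (k0 + km1 * eT)) by (apply Rmult_lt_0_compat; nra).
  field. repeat split; apply Rgt_not_eq; nra.
Qed.

Lemma W1_le_stationary s c : k0 < k2 * eT -> W1 s c -> s <= shat /\ c <= chat.
Proof.
  intros Hk HW. apply W1_iff in HW as [Hs [Hc [Hsd Hcd]]].
  (* sdot + cdot = k0 - k2 c, so both rates can only be nonnegative below chat *)
  assert (Hkc : k2 * c <= k0) by (pose proof (sdot_add_cdot s c); lra).
  split.
  - unfold Defs.shat. apply Rle_div_r; [nra |].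
    assert (0 <= k2 * sdot s c) by (apply Rmult_le_pos; lra).
    assert (0 <= (k0 - k2 * c) * (k1 * s + km1)) by (apply Rmult_le_pos; nra).
    unfold Defs.sdot in *. nra.
  - unfold Defs.chat. apply Rle_div_r; lra.
Qed.

Lemma is_derive_sdot_comp (x y : R -> R) (t dx dy : R) :
  is_derive x t dx -> is_derive y t dy ->
  is_derive (fun r => sdot (x r) (y r)) t (k1 * (y t - eT) * dx + (k1 * x t + km1) * dy).
Proof.
  intros Hx Hy. unfold Defs.sdot. auto_derive.
  - repeat split; eexists; eassumption.
  - replace (Derive (fun r : R => x r) t) with dx by (symmetry; apply is_derive_unique, Hx).
    replace (Derive (fun r : R => y r) t) with dy by (symmetry; apply is_derive_unique, Hy).
    ring.
Qed.

Lemma is_derive_cdot_comp (x y : R -> R) (t dx dy : R) :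
  is_derive x t dx -> is_derive y t dy ->
  is_derive (fun r => cdot (x r) (y r)) t
    (k1 * (eT - y t) * dx + - (k1 * x t + km1 + k2) * dy).
Proof.
  intros Hx Hy. unfold Defs.cdot. auto_derive.
  - repeat split; eexists; eassumption.
  - replace (Derive (fun r : R => x r) t) with dx by (symmetry; apply is_derive_unique, Hx).
    replace (Derive (fun r : R => y r) t) with dy by (symmetry; apply is_derive_unique, Hy).
    ring.
Qed.

Section Trajectory.

Variables (T : R) (x y : R -> R).
Hypothesis solution : is_solution k0 k1 km1 k2 eT T x y.
Hypothesis start_in_W1 : W1 (x 0) (y 0).

Lemma W1_of_rates_nonneg tau : 0 <= tau < T ->
  (forall s, 0 <= s <= tau -> 0 <= sdot (x s) (y s) /\ 0 <= cdot (x s) (y s)) ->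
  W1 (x tau) (y tau).
Proof.
  intros Htau Hrates.
  destruct (proj1 (W1_iff _ _) start_in_W1) as [Hx0 [Hy0 _]].
  assert (x 0 <= x tau).
  { apply (le_of_is_derive_nonneg x (fun s => sdot (x s) (y s))); [lra | |].
    - intros s Hs. apply solution. lra.
    - intros s Hs. apply Hrates, Hs. }
  assert (y 0 <= y tau).
  { apply (le_of_is_derive_nonneg y (fun s => cdot (x s) (y s))); [lra | |].
    - intros s Hs. apply solution. lra.
    - intros s Hs. apply Hrates, Hs. }
  destruct (Hrates tau ltac:(lra)).
  apply W1_iff. repeat split; lra.
Qed.

Lemma rates_nonneg_while_cooperative tau : 0 <= tau < T ->
  (forall s, 0 <= s <= tau -> 0 <= k1 * x s + km1 /\ 0 <= k1 * (eT - y s)) ->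
  forall s, 0 <= s <= tau -> 0 <= sdot (x s) (y s) /\ 0 <= cdot (x s) (y s).
Proof.
  intros Htau Hoff.
  assert (Hsol : forall s, 0 <= s <= tau ->
            is_derive x s (sdot (x s) (y s)) /\ is_derive y s (cdot (x s) (y s)))
    by (intros s Hs; apply solution; lra).
  destruct (proj1 (W1_iff _ _) start_in_W1) as [_ [_ [Hu0 Hv0]]].
  apply (cooperative_nonneg tau (fun s => sdot (x s) (y s)) (fun s => cdot (x s) (y s))
           (fun s => k1 * (y s - eT)) (fun s => k1 * x s + km1)
           (fun s => k1 * (eT - y s)) (fun s => - (k1 * x s + km1 + k2)));
    try (intros s Hs; destruct (Hsol s Hs) as [Hx Hy]).
  1: apply is_derive_sdot_comp; assumption.
  1: apply is_derive_cdot_comp; assumption.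
  1-4: eapply is_derive_continuous;
         auto_derive; [repeat split; eexists; eassumption | reflexivity].
  1-2: apply Hoff, Hs.
  1-2: assumption.
Qed.

Lemma cooperative_coefficients_pos s : 0 <= s < T ->
  0 < k1 * x s + km1 /\ 0 < k1 * (eT - y s).
Proof.
  intros Hs.
  set (m := fun r => Rmin (k1 * x r + km1) (k1 * (eT - y r))).
  destruct (Rlt_le_dec 0 (m s)) as [Hpos | Hneg].
  { split; eapply Rlt_le_trans; [exact Hpos | apply Rmin_l | exact Hpos | apply Rmin_r]. }
  exfalso.
  assert (Hm0 : 0 < m 0).
  { destruct (proj1 (W1_iff _ _) start_in_W1) as [Hx0 _].
    assert (y 0 < eT) by exact (W1_lt_eT _ _ start_in_W1).
    apply Rmin_glb_lt; nra. }
  destruct (first_zero m s) as [t1 [Ht1 [Hzero Hbefore]]]; [lra | | exact Hm0 | exact Hneg |].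
  { intros r Hr. destruct (solution r ltac:(lra)) as [Hx Hy].
    apply continuous_Rmin; eapply is_derive_continuous;
      (auto_derive; [repeat split; eexists; eassumption | reflexivity]). }
  assert (HW1 : W1 (x t1) (y t1)).
  { apply W1_of_rates_nonneg; [lra |].
    apply rates_nonneg_while_cooperative; [lra |].
    intros r Hr.
    assert (Hmr : 0 <= m r).
    { destruct (Req_dec r t1) as [-> | Hne]; [lra | apply Rlt_le, Hbefore; lra]. }
    split; eapply Rle_trans; [exact Hmr | apply Rmin_l | exact Hmr | apply Rmin_r]. }
  destruct (proj1 (W1_iff _ _) HW1) as [Hx1 _].
  assert (y t1 < eT) by exact (W1_lt_eT _ _ HW1).
  assert (0 < m t1) by (apply Rmin_glb_lt; nra).
  lra.
Qed.

End Trajectory.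

Lemma W1_positively_invariant : positively_invariant k0 k1 km1 k2 eT W1.
Proof.
  intros T x y HT Hsol HW0 t Ht.
  apply (W1_of_rates_nonneg T x y Hsol HW0 t Ht).
  apply (rates_nonneg_while_cooperative T x y Hsol HW0 t Ht).
  intros s Hs. destruct (cooperative_coefficients_pos T x y Hsol HW0 s ltac:(lra)). lra.
Qed.

End MichaelisMentenModel.

Theorem lemma4p3 (k0 k1 km1 k2 eT : R) :
  0 < k0 -> 0 < k1 -> 0 < km1 -> 0 < k2 -> 0 < eT ->
  (* (a), no positive stationary point *)
  (k0 > k2 * eT ->
     (forall s, 0 <= s -> cnull k0 k1 km1 k2 eT s > snull k0 k1 km1 k2 eT s) /\
     (forall s, 0 <= s -> exists c, W1 k0 k1 km1 k2 eT s c)) /\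
  (* (a), positive stationary point *)
  (k2 * eT > k0 ->
     cnull k0 k1 km1 k2 eT (shat k0 k1 km1 k2 eT) = chat k0 k1 km1 k2 eT /\
     snull k0 k1 km1 k2 eT (shat k0 k1 km1 k2 eT) = chat k0 k1 km1 k2 eT /\
     (forall s c, W1 k0 k1 km1 k2 eT s c ->
        s <= shat k0 k1 km1 k2 eT /\ c <= chat k0 k1 km1 k2 eT)) /\
  (* (b) *)
  positively_invariant k0 k1 km1 k2 eT (W1 k0 k1 km1 k2 eT) /\
  (forall s c, W1 k0 k1 km1 k2 eT s c -> sdot k0 k1 km1 k2 eT s c >= 0).
Proof.
  intros Hk0 Hk1 Hkm1 Hk2 HeT.
  split; [| split; [| split]].
  - intros Hk. split.
    + intros s Hs. apply snull_lt_cnull; assumption.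
    + intros s Hs. exists (cnull k0 k1 km1 k2 eT s). apply W1_cnull; assumption.
  - intros Hk. split; [| split].
    + apply cnull_shat; assumption.
    + apply snull_shat; assumption.
    + intros s c. apply W1_le_stationary; assumption.
  - apply W1_positively_invariant; assumption.
  - intros s c HW. apply Rle_ge, (proj1 (W1_iff k0 k1 km1 k2 eT Hk1 Hkm1 Hk2 s c) HW).
Qed.
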